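(* Let $K$ be a field of characteristic $0$ and $\mathcal{H}$ a finite-dimensional associative $K$-algebra with $1$ which is split semisimple and symmetric with trace form $\tau\colon\mathcal{H}\to K$, and let $\dagger\colon\mathcal{H}\to\mathcal{H}$ be a $K$-linear anti-involution. Assume there exists a $\dagger$-symmetric basis $B_0$ of $\mathcal{H}$. Then $$\mathrm{trace}(\dagger\colon\mathcal{H}\to\mathcal{H})=\sum_{E\in\mathrm{Irr}(\mathcal{H})}\nu_E\dim E.$$ In particular, if $B_0=B_0^\vee$ (as sets), then $|\{b\in B_0\mid b^\vee=b\}|=\sum_{E\in\mathrm{Irr}(\mathcal{H})}\nu_E\dim E$.
   Context: $\mathrm{Irr}(\mathcal{H})$ denotes the set of simple $\mathcal{H}$-modules up to isomorphism; $\chi_E(h)=\mathrm{trace}(h,E)$. The Schur elements $c_E\in K\setminus\{0\}$ are defined by $\tau=\sum_{E\in\mathrm{Irr}(\mathcal{H})}c_E^{-1}\chi_E$. For a basis $B$ of $\mathcal{H}$, the dual basis $B^\vee=\{b^\vee\}$ is defined by $\tau(b'b^\vee)=\delta_{b,b'}$. A basis $B_0$ is $\dagger$-symmetric if $b^\dagger=b^\vee$ for all $b\in B_0$. For $E\in\mathrm{Irr}(\mathcal{H})$, $\nu_E:=\frac{1}{c_E\dim E}\sum_{b\in B_0}\chi_E(b^2)$ (which lies in $\{0,\pm1\}$ and is independent of the choice of $\dagger$-symmetric basis $B_0$). *)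

From HB Require Import structures.
From mathcomp Require Import all_boot all_order all_algebra falgebra.
Set Implicit Arguments. Unset Strict Implicit. Unset Printing Implicit Defensive.
Import GRing.Theory.
Local Open Scope ring_scope.

Section Defs.
Variables (K : fieldType) (H : falgType K).

Definition lin_trace (f : H -> H) : K :=
  \sum_(i < \dim {:H}) coord (vbasis {:H}) i (f (tnth (vbasis {:H}) i)).

(* unital K-algebra morphism H -> M_d(K), i.e. a d-dimensional H-module K^d *)
Definition alg_rep (d : nat) (rho : H -> 'M[K]_d) : Prop :=
  [/\ linear rho, rho 1 = 1%:M & forall a b, rho (a * b) = rho a *m rho b].

Definition split_semisimple : Prop :=
  exists (s : nat) (m : 'I_s -> nat) (phi : forall i, H -> 'M[K]_(m i)),
    [/\ forall i, (0 < m i)%N, forall i, alg_rep (phi i),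
        (forall a b, (forall i, phi i a = phi i b) -> a = b) &
        (forall M : forall i, 'M[K]_(m i), exists a, forall i, phi i a = M i)].

Definition simple_rep (d : nat) (rho : H -> 'M[K]_d) : Prop :=
  [/\ alg_rep rho, (0 < d)%N &
      forall U : 'M[K]_d, (forall h, stablemx U (rho h)) ->
        U = 0 \/ row_full U].

Definition iso_rep (d1 d2 : nat) (rho1 : H -> 'M[K]_d1) (rho2 : H -> 'M[K]_d2)
  : Prop :=
  exists P : 'M[K]_(d1, d2),
    [/\ row_free P, row_full P & forall h, rho1 h *m P = P *m rho2 h].

Definition irr_system (r : nat) (d : 'I_r -> nat)
  (rho : forall i, H -> 'M[K]_(d i)) : Prop :=
  [/\ forall i, simple_rep (rho i),
      forall i j, iso_rep (rho i) (rho j) -> i = j &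
      forall (e : nat) (sigma : H -> 'M[K]_e), simple_rep sigma ->
        exists i, iso_rep sigma (rho i)].

Definition symmetrizing_form (tau : H -> K) : Prop :=
  [/\ (forall (k : K) u v, tau (k *: u + v) = k * tau u + tau v), forall a b, tau (a * b) = tau (b * a) &
      forall a, (forall b, tau (a * b) = 0) -> a = 0].

Definition anti_involution (dag : H -> H) : Prop :=
  [/\ linear dag, forall a b, dag (a * b) = dag b * dag a &
      forall a, dag (dag a) = a].

Definition dual_basis (n : nat) (tau : H -> K) (B Bv : n.-tuple H) : Prop :=
  forall i j : 'I_n, tau (tnth B j * tnth Bv i) = (i == j)%:R.

Definition nu (n : nat) (B0 : n.-tuple H) (dE : nat) (rhoE : H -> 'M[K]_dE)
  (cE : K) : K :=
  (cE * dE%:R)^-1 * \sum_(j < n) \tr (rhoE (tnth B0 j * tnth B0 j)).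

End Defs.

From HB Require Import structures.
From mathcomp Require Import all_boot all_order all_algebra falgebra.
Import GRing.Theory.
Local Open Scope ring_scope.

(* Both sides equal sum_(b in B0) tau (b * b).  On the right this is the
   expansion tau = sum_E c_E^-1 chi_E.  On the left, B0^v is again a basis
   with tau-dual basis B0, so the trace of dag is
   sum_b tau (dag b^v * b) = sum_b tau (b * b).  When B0 = B0^v as sets,
   tau (b * b) is 1 if b^v = b and 0 otherwise. *)

Lemma sum_mul_delta {R : pzSemiRingType} {n} (k : 'I_n -> R) i :
  \sum_j k j * (i == j)%:R = k i.
Proof.
rewrite (bigD1 i) //= eqxx mulr1 big1 ?addr0 // => j.
by rewrite eq_sym => /negPf ->; rewrite mulr0.
Qed.

Section TraceForm.
Variables (K : fieldType) (H : falgType K) (tau : H -> K).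
Hypothesis tau_linear : forall (k : K) u v, tau (k *: u + v) = k * tau u + tau v.
HB.instance Definition _ := GRing.isLinear.Build K H K *%R tau tau_linear.

Section DualBasis.
Variables (B Bv : (\dim {:H}).-tuple H).
Hypothesis dualB : dual_basis tau B Bv.

Lemma dual_basis_free : free B.
Proof.
apply/freeP => k sum_k0 i.
have := congr1 (fun x => tau (x * tnth Bv i)) sum_k0.
rewrite mul0r linear0 mulr_suml linear_sum /= => <-.
rewrite -(sum_mul_delta k); apply: eq_bigr => j _.
by rewrite -scalerAl linearZ /= -(tnth_nth 0) dualB.
Qed.

Lemma dual_basis_basis : basis_of {:H} B.
Proof. by rewrite basisEfree dual_basis_free subvf size_tuple leqnn. Qed.

Lemma coord_dual_basis x j : coord B j x = tau (x * tnth Bv j).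
Proof.
rewrite {2}(coord_basis dual_basis_basis (memvf x)) mulr_suml linear_sum /=.
rewrite -(sum_mul_delta (coord B ^~ x)); apply: eq_bigr => i _.
by rewrite -scalerAl linearZ /= -(tnth_nth 0) dualB.
Qed.

Lemma lin_trace_dual_basis (f : {linear H -> H}) :
  lin_trace f = \sum_j tau (f (tnth B j) * tnth Bv j).
Proof.
pose E := vbasis {:H}.
transitivity (\sum_i \sum_j tau (tnth E i * tnth Bv j) * coord E i (f (tnth B j))).
  apply: eq_bigr => i _.
  rewrite {1}(coord_basis dual_basis_basis (memvf (tnth E i))) !linear_sum.
  apply: eq_bigr => j _.
  by rewrite !linearZ /= coord_dual_basis -(tnth_nth 0).
rewrite exchange_big; apply: eq_bigr => j _ /=.
rewrite {2}(coord_vbasis (memvf (f (tnth B j)))) mulr_suml linear_sum.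
apply: eq_bigr => i _.
by rewrite -scalerAl linearZ /= mulrC /E (tnth_nth 0 _ i).
Qed.

End DualBasis.

Hypothesis tau_sym : forall a b, tau (a * b) = tau (b * a).

Lemma dual_basis_sym {n} {B Bv : n.-tuple H} :
  dual_basis tau B Bv -> dual_basis tau Bv B.
Proof. by move=> dualB i j; rewrite tau_sym dualB eq_sym. Qed.

Section Involution.
Variable dag : H -> H.
Hypothesis dag_linear : linear dag.
HB.instance Definition _ := GRing.isLinear.Build K H H *:%R dag dag_linear.

Lemma lin_trace_involution (B Bv : (\dim {:H}).-tuple H) :
  involutive dag -> dual_basis tau B Bv -> (forall j, dag (tnth B j) = tnth Bv j) ->
  lin_trace dag = \sum_j tau (tnth B j * tnth B j).
Proof.
move=> dagK dualB dagB.
rewrite (lin_trace_dual_basis _ _ (dual_basis_sym dualB)).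
by apply: eq_bigr => j _; rewrite /= -dagB dagK.
Qed.

End Involution.
End TraceForm.

Lemma tau_sqr_dual_closed {K : fieldType} {H : falgType K} {tau : H -> K} {n}
    {B Bv : n.-tuple H} j :
  dual_basis tau B Bv -> B =i Bv ->
  tau (tnth B j * tnth B j) = (tnth Bv j == tnth B j)%:R.
Proof.
move=> dualB eqB; have /tnthP[k Bj_eq] : tnth B j \in Bv by rewrite -eqB mem_tnth.
rewrite [X in tau (_ * X)]Bj_eq dualB.
have [eq_kj|neq_kj] := eqVneq k j; first by subst k; rewrite -Bj_eq eqxx.
case: eqP => // Bvj_eq; have := dualB j j.
by rewrite Bvj_eq {2}Bj_eq dualB eqxx (negPf neq_kj) => /esym/eqP; rewrite oner_eq0.
Qed.

Lemma sum_tau_sqr_self_dual {K : fieldType} {H : falgType K} {tau : H -> K} {n}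
    {B Bv : n.-tuple H} :
  dual_basis tau B Bv -> B =i Bv ->
  \sum_j tau (tnth B j * tnth B j) = #|[set j | tnth Bv j == tnth B j]|%:R.
Proof.
move=> dualB eqB; rewrite -sum1_card natr_sum [RHS]big_mkcond /=.
by apply: eq_bigr => j _; rewrite (tau_sqr_dual_closed j dualB eqB) inE; case: eqP.
Qed.

Lemma sum_nu_mul_dim {K : fieldType} {H : falgType K} {tau : H -> K} {n}
    (B : n.-tuple H) {r : nat} {d : 'I_r -> nat}
    {rho : forall i : 'I_r, H -> 'M[K]_(d i)} {c : 'I_r -> K} :
  (forall i, c i != 0) -> (forall i, (d i)%:R != 0 :> K) ->
  (forall h, tau h = \sum_(i < r) (c i)^-1 * \tr (rho i h)) ->
  \sum_(i < r) nu B (rho i) (c i) * (d i)%:R = \sum_j tau (tnth B j * tnth B j).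
Proof.
move=> c_neq0 d_neq0 tauE.
under eq_bigr => i _ do
  rewrite /nu mulrAC invfM -(mulrA (c i)^-1) mulVf // mulr1 mulr_sumr.
by rewrite exchange_big; apply: eq_bigr => j _; rewrite tauE.
Qed.

Theorem proposition2p6 (K : fieldType) (H : falgType K)
  (tau : H -> K) (dag : H -> H)
  (r : nat) (d : 'I_r -> nat) (rho : forall i : 'I_r, H -> 'M[K]_(d i))
  (c : 'I_r -> K) (B0 B0v : (\dim {:H}).-tuple H) :
  [pchar K] =i pred0 ->
  split_semisimple H ->
  symmetrizing_form tau ->
  anti_involution dag ->
  irr_system rho ->
  (forall i, c i != 0) ->
  (forall h, tau h = \sum_(i < r) (c i)^-1 * \tr (rho i h)) ->
  basis_of {:H} B0 ->
  dual_basis tau B0 B0v ->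
  (forall j, dag (tnth B0 j) = tnth B0v j) ->
  lin_trace dag = \sum_(i < r) nu B0 (rho i) (c i) * (d i)%:R
  /\ (B0 =i B0v ->
      #|[set j | tnth B0v j == tnth B0 j]|%:R
        = \sum_(i < r) nu B0 (rho i) (c i) * (d i)%:R).
Proof.
move=> char0 _ [tau_linear tau_sym _] [dag_linear _ dagK] [irr_simple _ _]
  c_neq0 tauE _ dualB dagB.
have d_neq0 i : (d i)%:R != 0 :> K.
  by rewrite (proj1 (pcharf0P K) char0); case: (irr_simple i) => _ /lt0n_neq0.
rewrite (sum_nu_mul_dim B0 c_neq0 d_neq0 tauE).
split; first exact: lin_trace_involution.
by move=> eqB; rewrite (sum_tau_sqr_self_dual dualB eqB).
Qed.
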